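(* Let $\lambda\in(\frac16,\frac56)$. There is a constant $C>0$ (depending only on $\lambda$) such that for every $n\ge0$ and all $x,y\in[0,1]$ with $x\notin\mathcal E$ and $\frac1{12}\ell_n(x)\le|x-y|\le\frac12\ell_n(x)$, $$|F^\lambda(x)-F^\lambda(y)|\le C(|m_n(x)|+1)|x-y|.$$
   Context: Construction: $F^\lambda_0\equiv0$ on $[0,1]$. Given $F^\lambda_n$ with its $4^n$ closed intervals of generation $n$ (covering $[0,1]$, disjoint interiors, $F^\lambda_n$ affine on each), on each interval $[a,b]$ of generation $n$, with $\ell=b-a$ and slope $m$, $F^\lambda_{n+1}$ coincides with $F^\lambda_n$ at $a,a+\ell/3,a+2\ell/3,b$, equals $F^\lambda_n(a+\ell/2)+\lambda\ell\sqrt{1+m^2}$ at $a+\ell/2$, and is affine on $[a,a+\ell/3],[a+\ell/3,a+\ell/2],[a+\ell/2,a+2\ell/3],[a+2\ell/3,b]$. $F^\lambda=\lim_nF^\lambda_n$ (finite for $\lambda\in(\frac16,\frac56)$). Dynamics: $T(x)=3x$ on $[0,\frac13)$, $6x-2$ on $[\frac13,\frac12)$, $4-6x$ on $[\frac12,\frac23)$, $3x-2$ on $[\frac23,1]$; $U(x)=0,1,2,3$ on these intervals respectively; $u_n(x)=U(T^nx)$; $\beta_{0,3}(x,n)=\#\{k<n:u_k(x)\in\{0,3\}\}$, $\beta_{1,2}(x,n)=\#\{k<n:u_k(x)\in\{1,2\}\}$; $\ell_n(x)=3^{-\beta_{0,3}(x,n)}6^{-\beta_{1,2}(x,n)}$.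 $\mathcal E$ is the set of $x$ whose digit sequence $(u_n(x))$ is eventually constantly $0$ or eventually constantly $3$; for $x\notin\mathcal E$, $m_n(x)$ is the slope of $F^\lambda_n$ at $x$. *)

From Stdlib Require Import Reals Lra List.
From Coquelicot Require Import Coquelicot.
Import ListNotations.
Open Scope R_scope.

(** F^lambda_n is represented by the list of its 4^n + 1 breakpoints
    (x_i, F^lambda_n(x_i)), sorted by increasing x_i, with x_0 = 0 and
    x_{4^n} = 1; F^lambda_n is the affine interpolation between them. *)

Definition refine_seg (lam a fa b fb : R) : list (R * R) :=
  let l := b - a in
  let m := (fb - fa) / l in
  [ (a + l / 3, fa + m * (l / 3));
    (a + l / 2, fa + m * (l / 2) + lam * l * sqrt (1 + m ^ 2));
    (a + 2 * l / 3, fa + m * (2 * l / 3));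
    (b, fb) ].

Fixpoint refine_tail (lam : R) (p : R * R) (l : list (R * R)) : list (R * R) :=
  match l with
  | [] => []
  | q :: l' => refine_seg lam (fst p) (snd p) (fst q) (snd q) ++ refine_tail lam q l'
  end.

Definition refine (lam : R) (l : list (R * R)) : list (R * R) :=
  match l with
  | [] => []
  | p :: l' => p :: refine_tail lam p l'
  end.

Fixpoint nodes (lam : R) (n : nat) : list (R * R) :=
  match n with
  | O => [ (0, 0); (1, 0) ]
  | S n' => refine lam (nodes lam n')
  end.

Fixpoint interp (l : list (R * R)) (x : R) : R :=
  match l with
  | p :: ((q :: _) as l') =>
      if Rle_dec x (fst q)
      then snd p + (snd q - snd p) / (fst q - fst p) * (x - fst p)
      else interp l' x
  | _ => 0
  end.

Fixpoint slope_of (l : list (R * R)) (x : R) : R :=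
  match l with
  | p :: ((q :: _) as l') =>
      if Rle_dec x (fst q)
      then (snd q - snd p) / (fst q - fst p)
      else slope_of l' x
  | _ => 0
  end.

Definition Fn (lam : R) (n : nat) (x : R) : R := interp (nodes lam n) x.

Definition Flam (lam : R) (x : R) : R := real (Lim_seq (fun n => Fn lam n x)).

(** m_n(x): slope of F^lambda_n at x (meaningful for x not in E, where x is
    never a breakpoint). *)
Definition mslope (lam : R) (n : nat) (x : R) : R := slope_of (nodes lam n) x.

Definition Tmap (x : R) : R :=
  if Rlt_dec x (1/3) then 3 * x
  else if Rlt_dec x (1/2) then 6 * x - 2
  else if Rlt_dec x (2/3) then 4 - 6 * x
  else 3 * x - 2.

Definition Umap (x : R) : nat :=
  if Rlt_dec x (1/3) then 0%nat
  else if Rlt_dec x (1/2) then 1%nat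
  else if Rlt_dec x (2/3) then 2%nat
  else 3%nat.

Definition udigit (x : R) (n : nat) : nat := Umap (Nat.iter n Tmap x).

Fixpoint beta03 (x : R) (n : nat) : nat :=
  match n with
  | O => O
  | S k => (beta03 x k + (if orb (Nat.eqb (udigit x k) 0) (Nat.eqb (udigit x k) 3)
                           then 1 else 0))%nat
  end.

Fixpoint beta12 (x : R) (n : nat) : nat :=
  match n with
  | O => O
  | S k => (beta12 x k + (if orb (Nat.eqb (udigit x k) 1) (Nat.eqb (udigit x k) 2)
                           then 1 else 0))%nat
  end.

Definition ell (x : R) (n : nat) : R :=
  / (3 ^ beta03 x n) * / (6 ^ beta12 x n).

Definition inE (x : R) : Prop :=
  exists (c N : nat), (c = 0%nat \/ c = 3%nat) /\
    forall k, (N <= k)%nat -> udigit x k = c.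

(* The four sub-pieces have lengths l/3, l/6, l/6, l/3, exactly as the inverse branches of T,
   so the piece of generation n containing x has length ell_n(x).

   Each sub-piece has (length) * (1 + |slope|) at most (1 + 6 lam)/6 times that of its parent,
   and its chord stays within lam l (1 + |m|) of the parent chord.  Since 6 lam < 5, summing
   this geometric series shows that on a piece of generation n every later F^lam_N, hence
   F^lam, stays within K l (1 + |m|) of the chord, with K = 6 / (5 - 6 lam).

   Since 6 lam > 1, the bent slopes m +- 6 lam sqrt (1 + m^2) are comparable to m, so two
   adjacent pieces have lengths within a factor 2 and slopes with comparable 1 + |m|.  When
   ell_n(x)/12 <= |x - y| <= ell_n(x)/2, the point y lies in the piece of x or in a neighbour;
   passing through their common node, |F(x) - F(y)| is bounded by the slope terms plus the
   chord deviations, all O((1 + |m_n(x)|) |x - y|). *)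

From Pilot Require Import Defs.
From Stdlib Require Import Reals.
From Coquelicot Require Import Coquelicot.
From Stdlib Require Import Lra Lia List.
(* Re-imported so that [Defs.interp] shadows Coquelicot's [interp]. *)
Import Defs ListNotations.
Open Scope R_scope.

(** * Pieces of a list of nodes *)

Definition chord_slope (p q : R * R) : R := (snd q - snd p) / (fst q - fst p).

Definition chord (p q : R * R) (u : R) : R := snd p + chord_slope p q * (u - fst p).

Fixpoint pieces (L : list (R * R)) : list ((R * R) * (R * R)) :=
  match L with
  | p :: ((q :: _) as L') => (p, q) :: pieces L'
  | _ => []
  end.

Definition increasing (L : list (R * R)) : Prop :=
  forall p q, In (p, q) (pieces L) -> fst p < fst q.

Lemma pieces_app_cons X y Y : pieces (X ++ y :: Y) = pieces (X ++ [y]) ++ pieces (y :: Y).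
Proof.
  induction X as [|a X IH]; [reflexivity|].
  destruct X as [|b X]; [reflexivity|].
  cbn [app] in *.
  change (pieces (a :: b :: X ++ y :: Y)) with ((a, b) :: pieces (b :: X ++ y :: Y)).
  now rewrite IH.
Qed.

Lemma increasing_tail a L : increasing (a :: L) -> increasing L.
Proof. destruct L as [|b L]; intros H p q Hpq; [destruct Hpq|]. apply H; now right. Qed.

Lemma piece_start_after_head a L p q :
  increasing (a :: L) -> In (p, q) (pieces (a :: L)) -> p = a \/ fst a < fst p.
Proof.
  revert a; induction L as [|b L IH]; intros a Hinc Hin; [destruct Hin|].
  destruct Hin as [E|Hin]; [left; congruence|right].
  assert (Hab : fst a < fst b) by (apply Hinc; now left).
  destruct (IH b (increasing_tail a (b :: L) Hinc) Hin) as [->|Hb]; lra.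
Qed.

Lemma interp_on_piece L p q u : increasing L -> In (p, q) (pieces L) ->
  fst p <= u <= fst q -> interp L u = chord p q u.
Proof.
  induction L as [|a L IH]; intros Hinc Hin Hu; [destruct Hin|].
  destruct L as [|b L]; [destruct Hin|].
  assert (Hab : fst a < fst b) by (apply Hinc; now left).
  change (interp (a :: b :: L) u) with
    (if Rle_dec u (fst b) then chord a b u else interp (b :: L) u).
  destruct Hin as [E|Hin].
  - injection E as -> ->. destruct (Rle_dec u (fst q)); [reflexivity|lra].
  - destruct (Rle_dec u (fst b)) as [Hub|Hub]; [|apply IH; auto; now apply (increasing_tail a)].
    destruct (piece_start_after_head b L p q (increasing_tail a (b :: L) Hinc) Hin)
      as [->|Hbp]; [|lra].
    assert (Hbq : fst b < fst q) by (apply Hinc; now right).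
    unfold chord, chord_slope. replace u with (fst b) by lra. field. split; lra.
Qed.

Lemma slope_of_on_piece L p q u : increasing L -> In (p, q) (pieces L) ->
  fst p < u <= fst q -> slope_of L u = chord_slope p q.
Proof.
  induction L as [|a L IH]; intros Hinc Hin Hu; [destruct Hin|].
  destruct L as [|b L]; [destruct Hin|].
  change (slope_of (a :: b :: L) u) with
    (if Rle_dec u (fst b) then chord_slope a b else slope_of (b :: L) u).
  destruct Hin as [E|Hin].
  - injection E as -> ->. destruct (Rle_dec u (fst q)); [reflexivity|lra].
  - destruct (Rle_dec u (fst b)) as [Hub|Hub]; [|apply IH; auto; now apply (increasing_tail a)].
    destruct (piece_start_after_head b L p q (increasing_tail a (b :: L) Hinc) Hin)
      as [->|]; lra.
Qed.

Lemma piece_has_pred a L p q : In (p, q) (pieces (a :: L)) ->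
  p = a \/ exists o, In (o, p) (pieces (a :: L)).
Proof.
  revert a; induction L as [|b L IH]; intros a Hin; [destruct Hin|].
  destruct Hin as [E|Hin]; [left; congruence|right].
  destruct (IH b Hin) as [->|[o Ho]]; [exists a; now left|exists o; now right].
Qed.

Lemma piece_has_succ L p q d : In (p, q) (pieces L) ->
  q = last L d \/ exists r, In (q, r) (pieces L).
Proof.
  induction L as [|a L IH]; intros Hin; [destruct Hin|].
  destruct L as [|b L]; [destruct Hin|].
  destruct Hin as [E|Hin].
  - injection E as -> ->. destruct L as [|c L]; [now left|right; exists c; right; now left].
  - destruct (IH Hin) as [E|[r Hr]]; [now left|right; exists r; now right].
Qed.

Lemma last_app_cons {A : Type} (X : list A) y Y d : last (X ++ y :: Y) d = last (y :: Y) d.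
Proof.
  induction X as [|a X IH]; [reflexivity|]. rewrite <- app_comm_cons, <- IH. now destruct X.
Qed.

(** * Refinement *)

Definition third_node (p q : R * R) : R * R :=
  let l := fst q - fst p in (fst p + l / 3, snd p + chord_slope p q * (l / 3)).

Definition peak_node (lam : R) (p q : R * R) : R * R :=
  let l := fst q - fst p in let m := chord_slope p q in
  (fst p + l / 2, snd p + m * (l / 2) + lam * l * sqrt (1 + m ^ 2)).

Definition two_thirds_node (p q : R * R) : R * R :=
  let l := fst q - fst p in (fst p + 2 * l / 3, snd p + chord_slope p q * (2 * l / 3)).

Lemma refine_cons_cons lam p q L : refine lam (p :: q :: L) =
  [p; third_node p q; peak_node lam p q; two_thirds_node p q] ++ refine lam (q :: L).
Proof. now destruct q. Qed.

Lemma pieces_refine_pair lam A B : pieces (refine lam [A; B]) =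
  [(A, third_node A B); (third_node A B, peak_node lam A B);
   (peak_node lam A B, two_thirds_node A B); (two_thirds_node A B, B)].
Proof. now rewrite refine_cons_cons. Qed.

Lemma pieces_refine_cons_cons lam p q L :
  pieces (refine lam (p :: q :: L)) = pieces (refine lam [p; q]) ++ pieces (refine lam (q :: L)).
Proof.
  rewrite pieces_refine_pair, refine_cons_cons.
  change (refine lam (q :: L)) with (q :: refine_tail lam q L).
  now rewrite pieces_app_cons.
Qed.

Lemma in_pieces_refine lam L pq : In pq (pieces (refine lam L)) <->
  exists XY, In XY (pieces L) /\ In pq (pieces (refine lam [fst XY; snd XY])).
Proof.
  induction L as [|p L IH]; [simpl; firstorder|].
  destruct L as [|q L]; [simpl; firstorder|].
  rewrite pieces_refine_cons_cons, in_app_iff, IH. split.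
  - intros [H|[XY [H1 H2]]]; [exists (p, q); split; [now left|exact H]|].
    exists XY; split; [now right|exact H2].
  - intros [XY [[<-|H1] H2]]; [now left|right; now exists XY].
Qed.

Lemma last_refine lam L d : last (refine lam L) d = last L d.
Proof.
  induction L as [|p L IH]; [reflexivity|].
  destruct L as [|q L]; [reflexivity|].
  rewrite refine_cons_cons. change (refine lam (q :: L)) with (q :: refine_tail lam q L).
  rewrite last_app_cons. change (q :: refine_tail lam q L) with (refine lam (q :: L)).
  now rewrite IH.
Qed.

Definition refine_iter (lam : R) (k : nat) (L : list (R * R)) : list (R * R) :=
  Nat.iter k (refine lam) L.

Lemma refine_iter_S_r lam k L : refine_iter lam (S k) L = refine_iter lam k (refine lam L).
Proof. apply Nat.iter_succ_r. Qed.

Lemma in_pieces_refine_iter lam k L pq : In pq (pieces (refine_iter lam k L)) <->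
  exists XY, In XY (pieces L) /\ In pq (pieces (refine_iter lam k [fst XY; snd XY])).
Proof.
  revert L; induction k as [|k IH]; intros L.
  - split; [intros H; exists pq; split; [exact H|now left; destruct pq]|].
    intros [XY [H [<-|[]]]]. now destruct XY.
  - rewrite refine_iter_S_r, IH. split.
    + intros [XY [H1 H2]]. apply in_pieces_refine in H1 as [Z [HZ HXY]].
      exists Z; split; [exact HZ|]. rewrite refine_iter_S_r. apply IH. now exists XY.
    + intros [Z [HZ H]]. rewrite refine_iter_S_r in H. apply IH in H as [XY [HXY H]].
      exists XY; split; [|exact H]. apply in_pieces_refine. now exists Z.
Qed.

Lemma last_refine_iter lam k L d : last (refine_iter lam k L) d = last L d.
Proof.
  induction k as [|k IH]; [reflexivity|].
  unfold refine_iter; rewrite Nat.iter_succ. apply (eq_trans (last_refine _ _ _) IH).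
Qed.

Lemma nodes_refine_iter lam n : nodes lam n = refine_iter lam n [(0, 0); (1, 0)].
Proof. induction n as [|n IH]; [reflexivity|]. simpl. now rewrite IH. Qed.

Lemma nodes_add lam k n : nodes lam (k + n) = refine_iter lam k (nodes lam n).
Proof. induction k as [|k IH]; [reflexivity|]. simpl. now rewrite IH. Qed.

Lemma nodes_head lam n : exists L, nodes lam n = (0, 0) :: L.
Proof.
  induction n as [|n [L IH]]; [now exists [(1, 0)]|].
  exists (refine_tail lam (0, 0) L). simpl. now rewrite IH.
Qed.

Lemma nodes_last lam n : last (nodes lam n) (0, 0) = (1, 0).
Proof. now rewrite nodes_refine_iter, last_refine_iter. Qed.

Lemma nodes_piece_has_pred lam n p q : In (p, q) (pieces (nodes lam n)) ->
  fst p = 0 \/ exists o, In (o, p) (pieces (nodes lam n)).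
Proof.
  destruct (nodes_head lam n) as [L ->]. intros H.
  destruct (piece_has_pred _ _ _ _ H) as [->|Ho]; [now left|now right].
Qed.

Lemma nodes_piece_has_succ lam n p q : In (p, q) (pieces (nodes lam n)) ->
  fst q = 1 \/ exists r, In (q, r) (pieces (nodes lam n)).
Proof.
  intros H. destruct (piece_has_succ _ _ _ (0, 0) H) as [->|Hr]; [|now right].
  left. now rewrite nodes_last.
Qed.

Lemma fst_third_node p q : fst (third_node p q) = fst p + (fst q - fst p) / 3.
Proof. reflexivity. Qed.

Lemma fst_peak_node lam p q : fst (peak_node lam p q) = fst p + (fst q - fst p) / 2.
Proof. reflexivity. Qed.

Lemma fst_two_thirds_node p q : fst (two_thirds_node p q) = fst p + 2 * (fst q - fst p) / 3.
Proof. reflexivity. Qed.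

Ltac case_sub_piece H :=
  rewrite pieces_refine_pair in H; simpl In in H;
  destruct H as [H|[H|[H|[H|[]]]]]; injection H as <- <-;
  rewrite ?fst_third_node, ?fst_peak_node, ?fst_two_thirds_node in *.

Lemma sub_piece_bounds lam A B X Y : fst A < fst B -> In (X, Y) (pieces (refine lam [A; B])) ->
  fst A <= fst X /\ fst X < fst Y /\ fst Y <= fst B.
Proof. intros HAB H. case_sub_piece H; lra. Qed.

Lemma sub_pieces_cover lam A B u : fst A < fst B -> fst A <= u <= fst B ->
  exists X Y, In (X, Y) (pieces (refine lam [A; B])) /\ fst X <= u <= fst Y.
Proof.
  intros HAB Hu. rewrite pieces_refine_pair.
  destruct (Rle_dec u (fst (third_node A B))) as [H1|H1];
    [exists A, (third_node A B); split; [now left|lra]|].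
  destruct (Rle_dec u (fst (peak_node lam A B))) as [H2|H2];
    [exists (third_node A B), (peak_node lam A B); split; [right; now left|lra]|].
  destruct (Rle_dec u (fst (two_thirds_node A B))) as [H3|H3];
    [exists (peak_node lam A B), (two_thirds_node A B); split; [right; right; now left|lra]|].
  exists (two_thirds_node A B), B; split; [right; right; right; now left|].
  rewrite fst_two_thirds_node in *; lra.
Qed.

Lemma piece_refine_iter_bounds lam k A B p q : fst A < fst B ->
  In (p, q) (pieces (refine_iter lam k [A; B])) ->
  fst A <= fst p /\ fst p < fst q /\ fst q <= fst B.
Proof.
  revert A B; induction k as [|k IH]; intros A B HAB H.
  - destruct H as [H|[]]; injection H as <- <-; lra.
  - rewrite refine_iter_S_r, in_pieces_refine_iter in H. destruct H as [[X Y] [HXY H]].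
    destruct (sub_piece_bounds lam A B X Y HAB HXY) as (H1 & H2 & H3).
    destruct (IH X Y H2 H); lra.
Qed.

Lemma increasing_refine_iter lam k A B : fst A < fst B -> increasing (refine_iter lam k [A; B]).
Proof. intros HAB p q H. now apply (piece_refine_iter_bounds lam k A B). Qed.

Lemma increasing_nodes lam n : increasing (nodes lam n).
Proof. rewrite nodes_refine_iter. apply increasing_refine_iter; simpl; lra. Qed.

Lemma refine_iter_cover lam k A B u : fst A < fst B -> fst A <= u <= fst B ->
  exists p q, In (p, q) (pieces (refine_iter lam k [A; B])) /\ fst p <= u <= fst q.
Proof.
  revert A B; induction k as [|k IH]; intros A B HAB Hu; [exists A, B; split; [now left|lra]|].
  destruct (sub_pieces_cover lam A B u HAB Hu) as [X [Y [HXY Hu']]].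
  destruct (sub_piece_bounds lam A B X Y HAB HXY) as (_ & H & _).
  destruct (IH X Y H Hu') as [p [q [Hpq Hu'']]].
  exists p, q; split; [|exact Hu''].
  rewrite refine_iter_S_r, in_pieces_refine_iter. now exists (X, Y).
Qed.

(** * Intervals of generation n *)

(* The intervals of generation n are the images of [0,1] under n-fold compositions of
   inverse branches of T. *)
Inductive gen_interval : nat -> R -> R -> Prop :=
| gen_unit : gen_interval 0 0 1
| gen_branch0 n c d : gen_interval n c d -> gen_interval (S n) (c / 3) (d / 3)
| gen_branch1 n c d : gen_interval n c d -> gen_interval (S n) (1 / 3 + c / 6) (1 / 3 + d / 6)
| gen_branch2 n c d : gen_interval n c d -> gen_interval (S n) (2 / 3 - d / 6) (2 / 3 - c / 6)
| gen_branch3 n c d : gen_interval n c d -> gen_interval (S n) (2 / 3 + c / 3) (2 / 3 + d / 3).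

Lemma gen_interval_eq n c d c' d' : gen_interval n c d -> c = c' -> d = d' -> gen_interval n c' d'.
Proof. now intros H -> ->. Qed.

Lemma gen_interval_bounds n c d : gen_interval n c d -> 0 <= c /\ c < d /\ d <= 1.
Proof. induction 1; lra. Qed.

Lemma gen_interval_reflect n c d : gen_interval n c d -> gen_interval n (1 - d) (1 - c).
Proof.
  induction 1 as [| |n c d H _|n c d H _|].
  - apply (gen_interval_eq _ _ _ _ _ gen_unit); lra.
  - apply (gen_interval_eq _ _ _ _ _ (gen_branch3 _ _ _ IHgen_interval)); lra.
  - apply (gen_interval_eq _ _ _ _ _ (gen_branch2 _ _ _ H)); lra.
  - apply (gen_interval_eq _ _ _ _ _ (gen_branch1 _ _ _ H)); lra.
  - apply (gen_interval_eq _ _ _ _ _ (gen_branch0 _ _ _ IHgen_interval)); lra.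
Qed.

Lemma piece_refine_iter_gen lam k A B p q : fst A < fst B ->
  In (p, q) (pieces (refine_iter lam k [A; B])) ->
  exists c d, gen_interval k c d /\
    fst p = fst A + (fst B - fst A) * c /\ fst q = fst A + (fst B - fst A) * d.
Proof.
  revert A B; induction k as [|k IH]; intros A B HAB H.
  - destruct H as [H|[]]; injection H as <- <-.
    exists 0, 1; split; [exact gen_unit|split; ring].
  - rewrite refine_iter_S_r, in_pieces_refine_iter in H. destruct H as [[X Y] [HXY H]].
    destruct (sub_piece_bounds lam A B X Y HAB HXY) as (_ & HXY' & _).
    destruct (IH X Y HXY' H) as [c [d [Hcd [Hp Hq]]]].
    rewrite Hp, Hq; clear Hp Hq.
    case_sub_piece HXY.
    + exists (c / 3), (d / 3). split; [now constructor|split; field].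
    + exists (1 / 3 + c / 6), (1 / 3 + d / 6). split; [now constructor|split; field].
    + exists (1 / 2 + c / 6), (1 / 2 + d / 6). split; [|split; field].
      (* the branch [4 - 6 x] of T reverses orientation *)
      apply (gen_interval_eq _ _ _ _ _ (gen_branch2 _ _ _ (gen_interval_reflect _ _ _ Hcd))); lra.
    + exists (2 / 3 + c / 3), (2 / 3 + d / 3). split; [now constructor|split; field].
Qed.

Lemma Tmap_branch0 x : x < 1 / 3 -> Umap x = 0%nat /\ Tmap x = 3 * x.
Proof. intros H. unfold Umap, Tmap. now destruct (Rlt_dec x (1 / 3)). Qed.

Lemma Tmap_branch1 x : 1 / 3 <= x < 1 / 2 -> Umap x = 1%nat /\ Tmap x = 6 * x - 2.
Proof.
  intros H. unfold Umap, Tmap.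
  destruct (Rlt_dec x (1 / 3)); [lra|]. now destruct (Rlt_dec x (1 / 2)).
Qed.

Lemma Tmap_branch2 x : 1 / 2 <= x < 2 / 3 -> Umap x = 2%nat /\ Tmap x = 4 - 6 * x.
Proof.
  intros H. unfold Umap, Tmap.
  destruct (Rlt_dec x (1 / 3)); [lra|]. destruct (Rlt_dec x (1 / 2)); [lra|].
  now destruct (Rlt_dec x (2 / 3)).
Qed.

Lemma Tmap_branch3 x : 2 / 3 <= x -> Umap x = 3%nat /\ Tmap x = 3 * x - 2.
Proof.
  intros H. unfold Umap, Tmap.
  destruct (Rlt_dec x (1 / 3)); [lra|]. destruct (Rlt_dec x (1 / 2)); [lra|].
  destruct (Rlt_dec x (2 / 3)); [lra|]. now split.
Qed.

Lemma udigit_S x k : udigit x (S k) = udigit (Tmap x) k.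
Proof. unfold udigit. now rewrite Nat.iter_succ_r. Qed.

Lemma inE_Tmap x : inE (Tmap x) -> inE x.
Proof.
  intros [c [N [Hc H]]]. exists c, (S N). split; [exact Hc|]. intros [|k] Hk; [lia|].
  rewrite udigit_S. apply H. lia.
Qed.

Lemma inE_fixed x : Tmap x = x -> Umap x = 0%nat \/ Umap x = 3%nat -> inE x.
Proof.
  intros Hx Hu. exists (Umap x), 0%nat. split; [exact Hu|]. intros k _. unfold udigit.
  f_equal. induction k as [|k IH]; [reflexivity|]. now rewrite Nat.iter_succ, IH.
Qed.

Lemma inE_0 : inE 0.
Proof.
  destruct (Tmap_branch0 0 ltac:(lra)) as [U T]. apply inE_fixed; [rewrite T; ring|now left].
Qed.

Lemma inE_1 : inE 1.
Proof.
  destruct (Tmap_branch3 1 ltac:(lra)) as [U T]. apply inE_fixed; [rewrite T; ring|now right].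
Qed.

Lemma inE_third : inE (1 / 3).
Proof.
  apply inE_Tmap. destruct (Tmap_branch1 (1 / 3) ltac:(lra)) as [_ ->].
  replace (6 * (1 / 3) - 2) with 0 by field. exact inE_0.
Qed.

Lemma inE_half : inE (1 / 2).
Proof.
  apply inE_Tmap. destruct (Tmap_branch2 (1 / 2) ltac:(lra)) as [_ ->].
  replace (4 - 6 * (1 / 2)) with 1 by field. exact inE_1.
Qed.

Lemma inE_two_thirds : inE (2 / 3).
Proof.
  apply inE_Tmap. destruct (Tmap_branch3 (2 / 3) ltac:(lra)) as [_ ->].
  replace (3 * (2 / 3) - 2) with 0 by field. exact inE_0.
Qed.

Definition outer_digit (u : nat) : nat := if orb (Nat.eqb u 0) (Nat.eqb u 3) then 1 else 0.
Definition inner_digit (u : nat) : nat := if orb (Nat.eqb u 1) (Nat.eqb u 2) then 1 else 0.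

Lemma beta03_S x n : beta03 x (S n) = (outer_digit (Umap x) + beta03 (Tmap x) n)%nat.
Proof.
  induction n as [|n IH]; [simpl; unfold outer_digit, udigit; simpl; lia|].
  change (beta03 x (S (S n))) with (beta03 x (S n) + outer_digit (udigit x (S n)))%nat.
  rewrite IH, udigit_S. simpl. unfold outer_digit. lia.
Qed.

Lemma beta12_S x n : beta12 x (S n) = (inner_digit (Umap x) + beta12 (Tmap x) n)%nat.
Proof.
  induction n as [|n IH]; [simpl; unfold inner_digit, udigit; simpl; lia|].
  change (beta12 x (S (S n))) with (beta12 x (S n) + inner_digit (udigit x (S n)))%nat.
  rewrite IH, udigit_S. simpl. unfold inner_digit. lia.
Qed.

Lemma ell_S_outer x n : Umap x = 0%nat \/ Umap x = 3%nat -> ell x (S n) = ell (Tmap x) n / 3.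
Proof.
  intros HU. unfold ell. rewrite beta03_S, beta12_S.
  assert (outer_digit (Umap x) = 1%nat /\ inner_digit (Umap x) = 0%nat) as [-> ->]
    by (destruct HU as [-> | ->]; auto).
  rewrite !pow_add. simpl. field. split; apply pow_nonzero; lra.
Qed.

Lemma ell_S_inner x n : Umap x = 1%nat \/ Umap x = 2%nat -> ell x (S n) = ell (Tmap x) n / 6.
Proof.
  intros HU. unfold ell. rewrite beta03_S, beta12_S.
  assert (outer_digit (Umap x) = 0%nat /\ inner_digit (Umap x) = 1%nat) as [-> ->]
    by (destruct HU as [-> | ->]; auto).
  rewrite !pow_add. simpl. field. split; apply pow_nonzero; lra.
Qed.

Lemma gen_interval_interior n c d x : gen_interval n c d -> c <= x <= d -> ~ inE x ->
  c < x < d /\ d - c = ell x n.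
Proof.
  intros H; revert x; induction H as [|n c d H IH|n c d H IH|n c d H IH|n c d H IH];
    intros x Hx HE; try pose proof (gen_interval_bounds n c d H);
    assert (HT : ~ inE (Tmap x)) by (intros HT; apply HE, inE_Tmap, HT).
  - assert (x <> 0) by (intros ->; apply HE, inE_0).
    assert (x <> 1) by (intros ->; apply HE, inE_1).
    split; [lra|]. unfold ell. simpl. lra.
  - assert (x <> 1 / 3) by (intros ->; apply HE, inE_third).
    destruct (Tmap_branch0 x ltac:(lra)) as [U T]. rewrite T in HT.
    destruct (IH (3 * x) ltac:(lra) HT). rewrite ell_S_outer, T by auto. lra.
  - assert (x <> 1 / 2) by (intros ->; apply HE, inE_half).
    destruct (Tmap_branch1 x ltac:(lra)) as [U T]. rewrite T in HT.
    destruct (IH (6 * x - 2) ltac:(lra) HT). rewrite ell_S_inner, T by auto. lra.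
  - assert (x <> 2 / 3) by (intros ->; apply HE, inE_two_thirds).
    destruct (Tmap_branch2 x ltac:(lra)) as [U T]. rewrite T in HT.
    destruct (IH (4 - 6 * x) ltac:(lra) HT). rewrite ell_S_inner, T by auto. lra.
  - destruct (Tmap_branch3 x ltac:(lra)) as [U T]. rewrite T in HT.
    destruct (IH (3 * x - 2) ltac:(lra) HT). rewrite ell_S_outer, T by auto. lra.
Qed.

(** * Deviation from the chord *)

Lemma chord_shift X Y A B u : chord X Y u - chord A B u =
  (snd X - chord A B (fst X)) + (chord_slope X Y - chord_slope A B) * (u - fst X).
Proof. unfold chord. ring. Qed.

Lemma sqrt_1_plus_sqr_bounds m :
  1 <= sqrt (1 + m ^ 2) /\ Rabs m <= sqrt (1 + m ^ 2) <= 1 + Rabs m.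
Proof.
  assert (Hpos : 0 <= 1 + m ^ 2) by nra.
  pose proof (sqrt_sqrt _ Hpos) as Hsq. pose proof (sqrt_pos (1 + m ^ 2)).
  set (s := sqrt (1 + m ^ 2)) in *.
  assert (Habs : Rabs m * Rabs m = m ^ 2) by (rewrite <- Rabs_mult, Rabs_pos_eq by nra; ring).
  pose proof (Rabs_pos m). repeat split; nra.
Qed.

Section SubPieces.

Variable lam : R.
Variables A B : R * R.
Hypothesis HAB : fst A < fst B.

Let m := chord_slope A B.
Let s := sqrt (1 + m ^ 2).

Lemma chord_slope_first_third : chord_slope A (third_node A B) = m.
Proof. unfold m, third_node, chord_slope; simpl. field. lra. Qed.

Lemma chord_slope_rise : chord_slope (third_node A B) (peak_node lam A B) = m + 6 * lam * s.
Proof. unfold s, m, third_node, peak_node, chord_slope; simpl. field. lra. Qed.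

Lemma chord_slope_fall : chord_slope (peak_node lam A B) (two_thirds_node A B) = m - 6 * lam * s.
Proof. unfold s, m, two_thirds_node, peak_node, chord_slope; simpl. field. lra. Qed.

Lemma chord_slope_last_third : chord_slope (two_thirds_node A B) B = m.
Proof. unfold m, two_thirds_node, chord_slope; simpl. field. lra. Qed.

Lemma third_node_on_chord : snd (third_node A B) - chord A B (fst (third_node A B)) = 0.
Proof. unfold chord, third_node; simpl. ring. Qed.

Lemma peak_node_height :
  snd (peak_node lam A B) - chord A B (fst (peak_node lam A B)) = lam * (fst B - fst A) * s.
Proof. unfold s, m, chord, peak_node; simpl. ring. Qed.

Lemma two_thirds_node_on_chord :
  snd (two_thirds_node A B) - chord A B (fst (two_thirds_node A B)) = 0.
Proof. unfold chord, two_thirds_node; simpl. ring. Qed.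

End SubPieces.

Lemma real_Lim_seq_close (v : nat -> R) c e n : (forall N, (n <= N)%nat -> Rabs (v N - c) <= e) ->
  Rabs (real (Lim_seq v) - c) <= e.
Proof.
  intros Hv.
  assert (Hup : Rbar_le (Lim_seq v) (Lim_seq (fun _ => c + e))).
  { apply Lim_seq_le_loc. exists n. intros N HN. specialize (Hv N HN). split_Rabs; lra. }
  assert (Hlow : Rbar_le (Lim_seq (fun _ => c - e)) (Lim_seq v)).
  { apply Lim_seq_le_loc. exists n. intros N HN. specialize (Hv N HN). split_Rabs; lra. }
  rewrite Lim_seq_const in Hup, Hlow.
  destruct (Lim_seq v); simpl in *; try contradiction. split_Rabs; lra.
Qed.

Section Deviation.

Variable lam : R.
Hypothesis Hlam : 1 / 6 < lam < 5 / 6.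

Lemma sub_piece_estimates A B X Y u : fst A < fst B ->
  In (X, Y) (pieces (refine lam [A; B])) -> fst X <= u <= fst Y ->
  (fst Y - fst X) * (1 + Rabs (chord_slope X Y))
    <= (1 + 6 * lam) / 6 * (fst B - fst A) * (1 + Rabs (chord_slope A B)) /\
  Rabs (chord X Y u - chord A B u) <= lam * (fst B - fst A) * (1 + Rabs (chord_slope A B)).
Proof.
  intros HAB HXY Hu. rewrite chord_shift.
  pose proof (Rabs_pos (chord_slope A B)).
  destruct (sqrt_1_plus_sqr_bounds (chord_slope A B)) as [Hs1 Hs2].
  set (l := fst B - fst A) in *. set (m := chord_slope A B) in *. set (s := sqrt (1 + m ^ 2)) in *.
  assert (Hl : 0 < l) by (unfold l; lra).
  assert (Hw : lam * l * s <= lam * l * (1 + Rabs m)) by (apply Rmult_le_compat_l; nra).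
  assert (Hls : 0 <= lam * l * s) by (apply Rmult_le_pos; nra).
  assert (Hrise : 1 + Rabs (m + 6 * lam * s) <= (1 + 6 * lam) * (1 + Rabs m))
    by (split_Rabs; nra).
  assert (Hfall : 1 + Rabs (m - 6 * lam * s) <= (1 + 6 * lam) * (1 + Rabs m))
    by (split_Rabs; nra).
  case_sub_piece HXY; fold l in Hu |- *.
  - rewrite chord_slope_first_third by exact HAB. fold m.
    replace (snd A - chord A B (fst A)) with 0 by (unfold chord; ring).
    rewrite Rminus_diag, Rmult_0_l, Rplus_0_l, Rabs_R0.
    replace (fst A + l / 3 - fst A) with (l / 3) by ring. split; nra.
  - rewrite third_node_on_chord, chord_slope_rise by exact HAB. fold m s.
    replace (fst A + l / 2 - (fst A + l / 3)) with (l / 6) by field.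
    replace (m + 6 * lam * s - m) with (6 * lam * s) by ring.
    assert (0 <= 6 * lam * s * (u - (fst A + l / 3)) <= lam * l * s).
    { replace (lam * l * s) with (6 * lam * s * (l / 6)) by field.
      split; [apply Rmult_le_pos|apply Rmult_le_compat_l]; nra. }
    split; [nra|rewrite Rabs_pos_eq; lra].
  - rewrite peak_node_height, chord_slope_fall by exact HAB. fold m s l.
    replace (fst A + 2 * l / 3 - (fst A + l / 2)) with (l / 6) by field.
    replace (m - 6 * lam * s - m) with (- (6 * lam * s)) by ring.
    assert (0 <= 6 * lam * s * (u - (fst A + l / 2)) <= lam * l * s).
    { replace (lam * l * s) with (6 * lam * s * (l / 6)) by field.
      split; [apply Rmult_le_pos|apply Rmult_le_compat_l]; nra. }
    split; [nra|rewrite Rabs_pos_eq; lra].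
  - rewrite two_thirds_node_on_chord, chord_slope_last_third by exact HAB. fold m.
    rewrite Rminus_diag, Rmult_0_l, Rplus_0_l, Rabs_R0.
    replace (fst B - (fst A + 2 * l / 3)) with (l / 3) by (unfold l; field). split; nra.
Qed.

Definition dev_const : R := 6 / (5 - 6 * lam).

Lemma dev_const_pos : 0 < dev_const.
Proof. unfold dev_const. apply Rdiv_lt_0_compat; lra. Qed.

Lemma dev_const_step : dev_const * (1 + 6 * lam) / 6 + lam <= dev_const.
Proof. assert (dev_const * (5 - 6 * lam) = 6) by (unfold dev_const; field; lra). nra. Qed.

Lemma chord_deviation k A B p q u : fst A < fst B ->
  In (p, q) (pieces (refine_iter lam k [A; B])) -> fst p <= u <= fst q ->
  Rabs (chord p q u - chord A B u)
    <= dev_const * (fst B - fst A) * (1 + Rabs (chord_slope A B)).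
Proof.
  pose proof dev_const_pos as HK. pose proof dev_const_step as HKs.
  revert A B; induction k as [|k IH]; intros A B HAB H Hu.
  - destruct H as [H|[]]; injection H as <- <-.
    rewrite Rminus_diag, Rabs_R0. pose proof (Rabs_pos (chord_slope A B)).
    apply Rmult_le_pos; [apply Rmult_le_pos|]; lra.
  - rewrite refine_iter_S_r, in_pieces_refine_iter in H. destruct H as [[X Y] [HXY H]].
    destruct (sub_piece_bounds lam A B X Y HAB HXY) as (_ & HXY' & _).
    destruct (piece_refine_iter_bounds lam k X Y p q HXY' H) as (Hp & _ & Hq).
    destruct (sub_piece_estimates A B X Y u HAB HXY ltac:(lra)) as [Hsize Hclose].
    specialize (IH X Y HXY' H Hu).
    set (w := (fst B - fst A) * (1 + Rabs (chord_slope A B))) in *.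
    assert (Hw : 0 <= w) by (pose proof (Rabs_pos (chord_slope A B)); unfold w; nra).
    replace (chord p q u - chord A B u) with
      ((chord p q u - chord X Y u) + (chord X Y u - chord A B u)) by ring.
    eapply Rle_trans; [apply Rabs_triang|].
    replace (dev_const * (fst B - fst A) * (1 + Rabs (chord_slope A B))) with (dev_const * w)
      by (unfold w; ring).
    rewrite Rmult_assoc in IH.
    assert (dev_const * ((fst Y - fst X) * (1 + Rabs (chord_slope X Y)))
      <= dev_const * ((1 + 6 * lam) / 6 * w)) by (apply Rmult_le_compat_l; unfold w in *; lra).
    replace (lam * (fst B - fst A) * (1 + Rabs (chord_slope A B))) with (lam * w) in Hclose
      by (unfold w; ring).
    nra.
Qed.

Lemma Fn_near_chord n N p q u : (n <= N)%nat -> In (p, q) (pieces (nodes lam n)) ->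
  fst p <= u <= fst q ->
  Rabs (Fn lam N u - chord p q u) <= dev_const * (fst q - fst p) * (1 + Rabs (chord_slope p q)).
Proof.
  intros HN Hpq Hu.
  assert (Hlt : fst p < fst q) by exact (increasing_nodes lam n p q Hpq).
  destruct (refine_iter_cover lam (N - n) p q u Hlt Hu) as [p' [q' [Hpq' Hu']]].
  assert (Hin : In (p', q') (pieces (nodes lam N))).
  { replace N with (N - n + n)%nat by lia. rewrite nodes_add, in_pieces_refine_iter.
    now exists (p, q). }
  unfold Fn. rewrite (interp_on_piece _ p' q' u (increasing_nodes lam N) Hin Hu').
  exact (chord_deviation (N - n) p q p' q' u Hlt Hpq' Hu').
Qed.

Lemma Flam_near_chord n p q u : In (p, q) (pieces (nodes lam n)) -> fst p <= u <= fst q ->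
  Rabs (Flam lam u - chord p q u) <= dev_const * (fst q - fst p) * (1 + Rabs (chord_slope p q)).
Proof.
  intros Hpq Hu. unfold Flam. apply (real_Lim_seq_close (fun N => Fn lam N u) _ _ n).
  intros N HN. now apply (Fn_near_chord n).
Qed.

Lemma Flam_diff_on_piece n p q x y : In (p, q) (pieces (nodes lam n)) ->
  fst p <= x <= fst q -> fst p <= y <= fst q ->
  Rabs (Flam lam x - Flam lam y)
    <= (1 + Rabs (chord_slope p q)) * (Rabs (x - y) + 2 * dev_const * (fst q - fst p)).
Proof.
  intros Hpq Hx Hy.
  pose proof (Flam_near_chord n p q x Hpq Hx) as Ex.
  pose proof (Flam_near_chord n p q y Hpq Hy) as Ey.
  replace (Flam lam x - Flam lam y) with
    ((Flam lam x - chord p q x) + chord_slope p q * (x - y) - (Flam lam y - chord p q y))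
    by (unfold chord; ring).
  pose proof (Rabs_pos (chord_slope p q)). pose proof (Rabs_pos (x - y)).
  assert (Rabs (chord_slope p q * (x - y)) <= (1 + Rabs (chord_slope p q)) * Rabs (x - y))
    by (rewrite Rabs_mult; nra).
  set (a := Flam lam x - chord p q x) in *. set (c := Flam lam y - chord p q y) in *.
  set (b := chord_slope p q * (x - y)) in *.
  assert (Rabs (a + b - c) <= Rabs a + Rabs b + Rabs c) by (split_Rabs; lra).
  lra.
Qed.

End Deviation.

(** * Neighbouring pieces *)

Definition comparable (c m m' : R) : Prop :=
  1 + Rabs m' <= c * (1 + Rabs m) /\ 1 + Rabs m <= c * (1 + Rabs m').

Lemma comparable_sym c m m' : comparable c m m' -> comparable c m' m.
Proof. unfold comparable; tauto. Qed.

Lemma comparable_mono c c' m m' : c <= c' -> comparable c m m' -> comparable c' m m'.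
Proof. unfold comparable. pose proof (Rabs_pos m). pose proof (Rabs_pos m'). intros; nra. Qed.

Lemma comparable_trans c c' m1 m2 m3 : 0 <= c -> 0 <= c' ->
  comparable c m1 m2 -> comparable c' m2 m3 -> comparable (c * c') m1 m3.
Proof.
  unfold comparable. intros Hc Hc' [H12 H21] [H23 H32].
  pose proof (Rabs_pos m1). pose proof (Rabs_pos m2). pose proof (Rabs_pos m3). split; nra.
Qed.

Lemma comparable_refl c m : 1 <= c -> comparable c m m.
Proof. pose proof (Rabs_pos m). split; nra. Qed.

Section Neighbours.

Variable lam : R.
Hypothesis Hlam : 1 / 6 < lam < 5 / 6.

Definition slope_ratio : R := 6 + 2 / (6 * lam - 1).

Lemma slope_ratio_ge_6 : 6 <= slope_ratio.
Proof.
  unfold slope_ratio. assert (0 < 2 / (6 * lam - 1)) by (apply Rdiv_lt_0_compat; lra). lra.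
Qed.

(* The bend [6 lam sqrt (1 + m^2)] exceeds [|m|] by a fixed fraction of [1 + |m|], because
   [6 lam > 1]: this is what keeps the slopes after a bend comparable to [m]. *)
Lemma comparable_bend m m' : Rabs (m' - m) = 6 * lam * sqrt (1 + m ^ 2) ->
  comparable slope_ratio m m'.
Proof.
  intros Hm'. destruct (sqrt_1_plus_sqr_bounds m) as [Hs1 Hs2].
  set (s := sqrt (1 + m ^ 2)) in *. pose proof (Rabs_pos m). pose proof (Rabs_pos m').
  assert (Hup : Rabs m' <= Rabs m + 6 * lam * s) by (rewrite <- Hm'; split_Rabs; lra).
  assert (Hlow : 6 * lam * s - Rabs m <= Rabs m') by (rewrite <- Hm'; split_Rabs; lra).
  assert (Hr : 2 / (6 * lam - 1) * (6 * lam - 1) = 2) by (field; lra).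
  assert (Hr0 : 0 < 2 / (6 * lam - 1)) by (apply Rdiv_lt_0_compat; lra).
  unfold comparable, slope_ratio. split; nra.
Qed.

Definition comparable_pieces (o p q : R * R) : Prop :=
  fst q - fst p <= 2 * (fst p - fst o) /\ fst p - fst o <= 2 * (fst q - fst p) /\
  comparable (slope_ratio ^ 2) (chord_slope o p) (chord_slope p q).

Lemma sub_pieces_junctions_comparable A B : fst A < fst B ->
  comparable_pieces A (third_node A B) (peak_node lam A B) /\
  comparable_pieces (third_node A B) (peak_node lam A B) (two_thirds_node A B) /\
  comparable_pieces (peak_node lam A B) (two_thirds_node A B) B.
Proof.
  intros HAB. pose proof slope_ratio_ge_6 as Hr.
  assert (Hr0 : 0 <= slope_ratio) by lra.
  assert (Hr2 : slope_ratio <= slope_ratio ^ 2) by (simpl; nra).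
  destruct (sqrt_1_plus_sqr_bounds (chord_slope A B)) as [Hs _].
  set (m := chord_slope A B) in *. set (s := sqrt (1 + m ^ 2)) in *.
  assert (Ht : 0 <= 6 * lam * s) by nra.
  assert (Hrise : comparable slope_ratio m (m + 6 * lam * s)).
  { apply comparable_bend. replace (m + 6 * lam * s - m) with (6 * lam * s) by ring.
    now apply Rabs_pos_eq. }
  assert (Hfall : comparable slope_ratio m (m - 6 * lam * s)).
  { apply comparable_bend. replace (m - 6 * lam * s - m) with (- (6 * lam * s)) by ring.
    rewrite Rabs_Ropp. now apply Rabs_pos_eq. }
  unfold comparable_pieces.
  rewrite chord_slope_first_third, chord_slope_rise, chord_slope_fall, chord_slope_last_third,
    fst_third_node, fst_peak_node, fst_two_thirds_node by exact HAB.
  fold m s.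
  refine (conj (conj _ (conj _ _)) (conj (conj _ (conj _ _)) (conj _ (conj _ _)))); try lra.
  - now apply (comparable_mono slope_ratio).
  - replace (slope_ratio ^ 2) with (slope_ratio * slope_ratio) by ring.
    apply (comparable_trans _ _ _ m); auto. now apply comparable_sym.
  - apply (comparable_mono slope_ratio); auto. now apply comparable_sym.
Qed.

Lemma sub_pieces_meet A B X Y X' Y' t : fst A < fst B ->
  In (X, Y) (pieces (refine lam [A; B])) -> In (X', Y') (pieces (refine lam [A; B])) ->
  fst X < t <= fst Y -> fst X' <= t < fst Y' ->
  (X = X' /\ Y = Y') \/ (X' = Y /\ t = fst Y /\ comparable_pieces X Y Y').
Proof.
  intros HAB HXY HXY' Ht Ht'.
  destruct (sub_pieces_junctions_comparable A B HAB) as (J1 & J2 & J3).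
  case_sub_piece HXY; case_sub_piece HXY';
    first [ left; split; reflexivity
          | exfalso; lra
          | right; split; [reflexivity|split; [lra|assumption]] ].
Qed.

Lemma first_piece_refine_iter k A B p q : fst A < fst B ->
  In (p, q) (pieces (refine_iter lam k [A; B])) -> fst p = fst A ->
  fst q - fst p = (fst B - fst A) / 3 ^ k /\ chord_slope p q = chord_slope A B.
Proof.
  revert A B; induction k as [|k IH]; intros A B HAB H Hp.
  - destruct H as [H|[]]; injection H as <- <-. split; [simpl; field|reflexivity].
  - rewrite refine_iter_S_r, in_pieces_refine_iter in H. destruct H as [[X Y] [HXY H]].
    destruct (sub_piece_bounds lam A B X Y HAB HXY) as (_ & HXY' & _).
    destruct (piece_refine_iter_bounds lam k X Y p q HXY' H) as (HXp & _).
    case_sub_piece HXY; try lra.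
    destruct (IH A (third_node A B) HXY' H Hp) as [Hl Hs].
    rewrite Hl, Hs, chord_slope_first_third by exact HAB.
    split; [simpl; field; apply pow_nonzero; lra|reflexivity].
Qed.

Lemma last_piece_refine_iter k A B p q : fst A < fst B ->
  In (p, q) (pieces (refine_iter lam k [A; B])) -> fst q = fst B ->
  fst q - fst p = (fst B - fst A) / 3 ^ k /\ chord_slope p q = chord_slope A B.
Proof.
  revert A B; induction k as [|k IH]; intros A B HAB H Hq.
  - destruct H as [H|[]]; injection H as <- <-. split; [simpl; field|reflexivity].
  - rewrite refine_iter_S_r, in_pieces_refine_iter in H. destruct H as [[X Y] [HXY H]].
    destruct (sub_piece_bounds lam A B X Y HAB HXY) as (_ & HXY' & _).
    destruct (piece_refine_iter_bounds lam k X Y p q HXY' H) as (_ & _ & HqY).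
    case_sub_piece HXY; try lra.
    destruct (IH (two_thirds_node A B) B HXY' H Hq) as [Hl Hs].
    rewrite Hl, Hs, chord_slope_last_third by exact HAB.
    rewrite fst_two_thirds_node. split; [simpl; field; apply pow_nonzero; lra|reflexivity].
Qed.

Lemma consecutive_pieces_comparable k A B o p q : fst A < fst B ->
  In (o, p) (pieces (refine_iter lam k [A; B])) -> In (p, q) (pieces (refine_iter lam k [A; B])) ->
  comparable_pieces o p q.
Proof.
  revert A B; induction k as [|k IH]; intros A B HAB Hop Hpq.
  - destruct Hop as [Hop|[]]; destruct Hpq as [Hpq|[]].
    injection Hop as -> ->; injection Hpq as ->. lra.
  - rewrite refine_iter_S_r, in_pieces_refine_iter in Hop, Hpq.
    destruct Hop as [[X Y] [HXY Hop]]. destruct Hpq as [[X' Y'] [HXY' Hpq]].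
    destruct (sub_piece_bounds lam A B X Y HAB HXY) as (_ & HXY0 & _).
    destruct (sub_piece_bounds lam A B X' Y' HAB HXY') as (_ & HXY0' & _).
    pose proof (piece_refine_iter_bounds lam k X Y o p HXY0 Hop).
    pose proof (piece_refine_iter_bounds lam k X' Y' p q HXY0' Hpq).
    destruct (sub_pieces_meet A B X Y X' Y' (fst p) HAB HXY HXY' ltac:(lra) ltac:(lra))
      as [[<- <-]|(-> & Hp & HJ)]; [now apply (IH X Y)|].
    destruct (last_piece_refine_iter k X Y o p HXY0 Hop Hp) as [Hl Hs].
    destruct (first_piece_refine_iter k Y Y' p q HXY0' Hpq Hp) as [Hl' Hs'].
    destruct HJ as (J1 & J2 & J3). unfold comparable_pieces. rewrite Hl, Hs, Hl', Hs'.
    assert (H3 : 0 < / 3 ^ k) by (apply Rinv_0_lt_compat, pow_lt; lra).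
    unfold Rdiv. split; [|split; [|exact J3]]; nra.
Qed.

Lemma nodes_consecutive_pieces_comparable n o p q :
  In (o, p) (pieces (nodes lam n)) -> In (p, q) (pieces (nodes lam n)) -> comparable_pieces o p q.
Proof.
  rewrite nodes_refine_iter. apply consecutive_pieces_comparable. simpl; lra.
Qed.

End Neighbours.

(** * The estimate *)

Section Proposition.

Variable lam : R.
Hypothesis Hlam : 1 / 6 < lam < 5 / 6.

Lemma piece_of_point n x : 0 <= x <= 1 -> ~ inE x ->
  exists p q, In (p, q) (pieces (nodes lam n)) /\ fst p < x < fst q /\
    mslope lam n x = chord_slope p q /\ fst q - fst p = ell x n.
Proof.
  intros Hx HE.
  destruct (refine_iter_cover lam n (0, 0) (1, 0) x ltac:(simpl; lra) Hx) as [p [q [Hpq Hxpq]]].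
  destruct (piece_refine_iter_gen lam n (0, 0) (1, 0) p q ltac:(simpl; lra) Hpq)
    as [c [d [Hcd [Hp Hq]]]].
  simpl in Hp, Hq. rewrite Rminus_0_r, Rmult_1_l, Rplus_0_l in Hp, Hq.
  destruct (gen_interval_interior n c d x Hcd ltac:(lra) HE) as [Hin Hl].
  rewrite <- nodes_refine_iter in Hpq.
  exists p, q. split; [exact Hpq|split; [lra|split; [|lra]]].
  apply (slope_of_on_piece _ p q x (increasing_nodes lam n) Hpq). lra.
Qed.

Definition lipschitz_const : R := (1 + slope_ratio lam ^ 2) * (1 + 48 * dev_const lam).

Lemma Flam_diff_two_pieces n p q p' q' x y z :
  In (p, q) (pieces (nodes lam n)) -> In (p', q') (pieces (nodes lam n)) ->
  fst p <= x <= fst q -> fst p' <= y <= fst q' -> fst p <= z <= fst q -> fst p' <= z <= fst q' ->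
  Rabs (x - z) <= Rabs (x - y) -> Rabs (z - y) <= Rabs (x - y) ->
  fst q' - fst p' <= 2 * (fst q - fst p) ->
  comparable (slope_ratio lam ^ 2) (chord_slope p q) (chord_slope p' q') ->
  fst q - fst p <= 12 * Rabs (x - y) ->
  Rabs (Flam lam x - Flam lam y)
    <= lipschitz_const * (1 + Rabs (chord_slope p q)) * Rabs (x - y).
Proof.
  intros Hpq Hpq' Hx Hy Hz Hz' Hxz Hzy Hl' [Hw _] Hl.
  pose proof (Flam_diff_on_piece lam Hlam n p q x z Hpq Hx Hz) as Exz.
  pose proof (Flam_diff_on_piece lam Hlam n p' q' z y Hpq' Hz' Hy) as Ezy.
  pose proof (dev_const_pos lam Hlam) as HK.
  assert (Hc : 0 <= slope_ratio lam ^ 2) by (simpl; nra).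
  set (K := dev_const lam) in *. set (c := slope_ratio lam ^ 2) in *.
  set (w := 1 + Rabs (chord_slope p q)) in *. set (w' := 1 + Rabs (chord_slope p' q')) in *.
  set (D := Rabs (x - y)) in *.
  assert (Hw0 : 1 <= w) by (pose proof (Rabs_pos (chord_slope p q)); unfold w; lra).
  assert (Hw0' : 1 <= w') by (pose proof (Rabs_pos (chord_slope p' q')); unfold w'; lra).
  assert (Ha : Rabs (x - z) + 2 * K * (fst q - fst p) <= (1 + 48 * K) * D) by nra.
  assert (Hb : Rabs (z - y) + 2 * K * (fst q' - fst p') <= (1 + 48 * K) * D) by nra.
  assert (Flam lam x - Flam lam y = (Flam lam x - Flam lam z) + (Flam lam z - Flam lam y))
    as -> by ring.
  eapply Rle_trans; [apply Rabs_triang|].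
  unfold lipschitz_const; fold K c.
  assert (HD : 0 <= (1 + 48 * K) * D) by (pose proof (Rabs_pos (x - y)); unfold D; nra).
  assert (Exz' : w * (Rabs (x - z) + 2 * K * (fst q - fst p)) <= w * ((1 + 48 * K) * D))
    by (apply Rmult_le_compat_l; lra).
  assert (Ezy' : w' * (Rabs (z - y) + 2 * K * (fst q' - fst p')) <= c * w * ((1 + 48 * K) * D)).
  { apply Rmult_le_compat; try lra. pose proof (Rabs_pos (z - y)). nra. }
  nra.
Qed.

End Proposition.

Theorem proposition3p9 (lam : R) (Hlam : 1/6 < lam < 5/6) :
  exists C : R, 0 < C /\
    forall (n : nat) (x y : R),
      0 <= x <= 1 -> 0 <= y <= 1 -> ~ inE x ->
      ell x n / 12 <= Rabs (x - y) <= ell x n / 2 ->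
      Rabs (Flam lam x - Flam lam y) <= C * (Rabs (mslope lam n x) + 1) * Rabs (x - y).
Proof.
  exists (lipschitz_const lam). split.
  { pose proof (dev_const_pos lam Hlam). unfold lipschitz_const.
    apply Rmult_lt_0_compat; [|lra]. pose proof (pow2_ge_0 (slope_ratio lam)). lra. }
  intros n x y Hx Hy HE Hxy.
  destruct (piece_of_point lam n x Hx HE) as (p & q & Hpq & Hxpq & -> & Hl).
  rewrite Rplus_comm. rewrite <- Hl in Hxy.
  assert (Hr : 1 <= slope_ratio lam ^ 2) by (pose proof (slope_ratio_ge_6 lam Hlam); simpl; nra).
  destruct (Rlt_dec y (fst p)) as [Hyp|Hyp]; [|destruct (Rle_dec y (fst q)) as [Hyq|Hyq]].
  - destruct (nodes_piece_has_pred lam n p q Hpq) as [Hp|[o Hop]]; [lra|].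
    destruct (nodes_consecutive_pieces_comparable lam Hlam n o p q Hop Hpq) as (Hl1 & Hl2 & Hc).
    apply (Flam_diff_two_pieces lam Hlam n p q o p x y (fst p)); auto using comparable_sym;
      split_Rabs; lra.
  - apply (Flam_diff_two_pieces lam Hlam n p q p q x y x); auto using comparable_refl;
      split_Rabs; lra.
  - destruct (nodes_piece_has_succ lam n p q Hpq) as [Hq|[r Hqr]]; [lra|].
    destruct (nodes_consecutive_pieces_comparable lam Hlam n p q r Hpq Hqr) as (Hl1 & Hl2 & Hc).
    apply (Flam_diff_two_pieces lam Hlam n p q q r x y (fst q)); auto; split_Rabs; lra.
Qed.
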